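(* Let $X$ be a random variable taking values in a finite set $\mathcal X$ of size $s \ge 1$, and let $\ell := \log s - \mathcal H(X)$. Then for every $x \in \mathcal X$, \[ \mathbb P(X = x) \le \frac{2}{s} + \ell. \]
   Context: All logarithms are base $2$. The Shannon entropy of $X$ is $\mathcal H(X) = -\sum_{x\in\mathcal X}\mathbb P(X=x)\log \mathbb P(X=x)$, with the convention $0\log 0 = 0$. *)

From mathcomp Require Import all_boot all_order all_algebra.
From mathcomp Require Import reals exp.
Set Implicit Arguments. Unset Strict Implicit. Unset Printing Implicit Defensive.
Import Order.TTheory GRing.Theory Num.Theory.
Local Open Scope ring_scope.

Definition log2 {R : realType} (x : R) : R := ln x / ln 2.

(* The law of a random variable X with values in the finite set T is
   a probability mass function p : T -> R, p x = P(X = x). *)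
Definition is_pmf {R : realType} {T : finType} (p : T -> R) : Prop :=
  (forall x, 0 <= p x) /\ \sum_(x : T) p x = 1.

Definition entropy {R : realType} {T : finType} (p : T -> R) : R :=
  - \sum_(x : T) (if p x == 0 then 0 else p x * log2 (p x)).

From mathcomp Require Import all_boot all_order all_algebra.
From mathcomp Require Import reals exp.
From mathcomp Require Import lra.
Set Implicit Arguments. Unset Strict Implicit. Unset Printing Implicit Defensive.
Import Order.TTheory GRing.Theory Num.Theory.
Local Open Scope ring_scope.

(* Up to the factor [ln 2], the gap [log s - H(p)] is the relative entropy
   [D(p || u)] to the uniform law [u].  Gibbs' inequality [D(p || q) >= 1 - sum q]
   holds for every positive weight [q], not only for probabilities; applied to
   [q := u] with the mass at [x] doubled, it gives
   [ln 2 * (log s - H(p)) - p x * ln 2 = D(p || q) >= -1/s],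
   and [ln 2 >= 1/2] turns [1 / (s ln 2)] into at most [2/s]. *)

Section LnBounds.
Variable R : realType.
Implicit Types a c t : R.

Lemma ln_le_subr1 t : 0 < t -> ln t <= t - 1.
Proof.
move=> t_gt0; have := @le_ln1Dx R (t - 1); rewrite addrCA subrr addr0; apply.
by rewrite ltrBrDl subrr.
Qed.

Lemma ln2_ge_half : 2^-1 <= ln (2 : R).
Proof.
have := @ln_le_subr1 2^-1; rewrite lnV ?posrE // invr_gt0 ltr0n => /(_ isT); lra.
Qed.

Lemma subr_le_mul_ln_div a c : 0 < a -> 0 < c -> a - c <= a * ln (a / c).
Proof.
move=> a_gt0 c_gt0.
have := @ln_le_subr1 (c / a) (divr_gt0 c_gt0 a_gt0).
rewrite -invf_div lnV ?posrE ?divr_gt0 // lerNl => /(ler_wpM2l (ltW a_gt0)).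
by rewrite opprB mulrBr mulr1 invf_div mulrCA divff ?gt_eqF // mulr1.
Qed.

End LnBounds.

Section RelativeEntropy.
Variables (R : realType) (T : finType).
Implicit Types p q : T -> R.

Definition relative_entropy p q : R :=
  \sum_y (if p y == 0 then 0 else p y * ln (p y / q y)).

Lemma relative_entropy_ge p q :
  (forall y, 0 <= p y) -> (forall y, 0 < q y) ->
  \sum_y p y - \sum_y q y <= relative_entropy p q.
Proof.
move=> p_ge0 q_gt0; rewrite -sumrB; apply: ler_sum => y _.
case: eqP => [->|/eqP py_neq0]; first by rewrite sub0r lerNl oppr0 ltW.
by apply: subr_le_mul_ln_div; rewrite // lt_neqAle eq_sym py_neq0 p_ge0.
Qed.

Section Reweight.
Variables (q : T -> R) (x : T) (c : R).
Hypotheses (q_gt0 : forall y, 0 < q y) (c_gt0 : 0 < c).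

Definition reweight y : R := if y == x then c * q y else q y.

Lemma reweight_gt0 y : 0 < reweight y.
Proof. by rewrite /reweight; case: eqP; rewrite ?mulr_gt0. Qed.

Lemma sum_reweight : \sum_y reweight y = \sum_y q y + (c - 1) * q x.
Proof.
rewrite (bigD1 x) //= [in RHS](bigD1 x) //= /reweight eqxx.
rewrite (eq_bigr q) => [|y /negPf ->] //; lra.
Qed.

Lemma relative_entropy_reweight p : 0 <= p x ->
  relative_entropy p reweight = relative_entropy p q - p x * ln c.
Proof.
move=> px_ge0; rewrite /relative_entropy (bigD1 x) //= [in RHS](bigD1 x) //=.
rewrite /reweight eqxx.
rewrite (eq_bigr (fun y => if p y == 0 then 0 else p y * ln (p y / q y)));
  last by move=> y /negPf ->.
case: eqP => [->|/eqP px_neq0]; first by rewrite mul0r subr0.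
have px_gt0 : 0 < p x by rewrite lt_neqAle eq_sym px_neq0.
rewrite invfM mulrCA [ln (c^-1 * _)]lnM ?lnV ?posrE ?invr_gt0 ?divr_gt0 //.
lra.
Qed.

End Reweight.

End RelativeEntropy.

Lemma entropy_gap_relative_entropy (R : realType) (T : finType) (p : T -> R) :
  (0 < #|T|)%N -> is_pmf p ->
  ln 2 * (log2 (#|T|%:R : R) - entropy p) = relative_entropy p (fun=> #|T|%:R^-1).
Proof.
move=> T_gt0 [p_ge0 p_sum1]; set s : R := #|T|%:R.
have s_gt0 : 0 < s by rewrite ltr0n.
have ln2_log2 t : ln 2 * log2 t = ln t :> R.
  by rewrite /log2 mulrCA divff ?mulr1 // gt_eqF // ln_gt0 // ltr1n.
rewrite /entropy opprK mulrDr mulr_sumr ln2_log2.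
rewrite -[ln s]mul1r -{1}p_sum1 mulr_suml -big_split /= /relative_entropy.
apply: eq_bigr => y _; rewrite invrK.
case: eqP => [->|/eqP py_neq0]; first by rewrite mul0r mulr0 addr0.
have py_gt0 : 0 < p y by rewrite lt_neqAle eq_sym py_neq0 p_ge0.
by rewrite mulrCA ln2_log2 lnM ?posrE // mulrDr addrC.
Qed.

Theorem lemma3p3 (R : realType) (T : finType) (p : T -> R) :
  (1 <= #|T|)%N -> is_pmf p ->
  forall x : T,
    p x <= 2 / (#|T|%:R) + (log2 (#|T|%:R : R) - entropy p).
Proof.
move=> T_gt0 pmf_p x; have [p_ge0 p_sum1] := pmf_p.
set s : R := #|T|%:R; have s_gt0 : 0 < s by rewrite ltr0n.
pose u (_ : T) : R := s^-1.
have u_gt0 y : 0 < u y by rewrite invr_gt0.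
have sum_u : \sum_y u y = 1 by rewrite sumr_const -mulr_natr mulVf ?gt_eqF.
have := relative_entropy_ge p_ge0 (reweight_gt0 x u_gt0 (ltr0n R 2)).
rewrite sum_reweight relative_entropy_reweight ?p_ge0 // p_sum1 sum_u.
rewrite -entropy_gap_relative_entropy // -/s.
rewrite /u; set gap := log2 s - entropy p => gibbs.
have ln2_gt0 : 0 < ln 2 :> R by rewrite ln_gt0 // ltr1n.
have : 0 <= ln 2 * (gap - p x + 2 / s).
  have := ler_wpM2r (ltW (u_gt0 x)) (@ln2_ge_half R); rewrite /u; nra.
by rewrite pmulr_rge0 //; lra.
Qed.
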